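(* Let $d\ge 1$, let $f=(f_1,\dots,f_d):\mathbb{R}^d\to\mathbb{R}^d$ be smooth, and let $\phi:\mathbb{R}^d\to\mathbb{R}$ be smooth. Let $\gamma_1$ and $\gamma_2$ be two exotic aromatic rooted forests, with node sets $V_1$ (root $r_1$, non-root nodes $V_1^0=V_1\setminus\{r_1\}$) and $V_2$ (root $r_2$, non-root nodes $V_2^0=V_2\setminus\{r_2\}$). For maps $\varphi:\pi(r_2)\to V_1$ and $\psi:\Gamma(r_2)\to V_1$, let $\gamma_{\varphi,\psi}$ be the exotic aromatic rooted forest obtained as follows: its nodes are $V_1\cup V_2^0$ (disjoint union) with root $r_1$; it contains all edges and lianas of $\gamma_1$, all edges and lianas of $\gamma_2$ not incident to $r_2$; each edge $w\to r_2$ of $\gamma_2$ (with $w\in\pi(r_2)$) is replaced by the edge $w\to\varphi(w)$; and each liana end of $\gamma_2$ located at $r_2$ (an element $e\in\Gamma(r_2)$) is moved to the node $\psi(e)\in V_1$. Then $$F(\gamma_2)\big(F(\gamma_1)(\phi)\big)=\sum_{\varphi:\pi(r_2)\to V_1}\ \sum_{\psi:\Gamma(r_2)\to V_1} F(\gamma_{\varphi,\psi})(\phi),$$ where the sums run over all maps $\varphi$ and $\psi$.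
   Context: An exotic aromatic rooted forest $\gamma$ consists of a finite set of nodes $V$ with a distinguished node $r$ (the root), write $V^0=V\setminus\{r\}$; a set of directed edges such that every node of $V^0$ has exactly one outgoing edge and the root has none (cycles, i.e. aromas, are allowed); and a finite set of lianas, each liana being an undirected edge with two ends, each end attached to a node (both ends may be attached to the same node). For a node $v$, $\pi(v)$ denotes the set of nodes $w$ having an edge $w\to v$ (predecessors of $v$), and $\Gamma(v)$ denotes the set of liana ends attached to $v$ (so lianas are counted with multiplicity: a liana with both ends at $v$ contributes two elements of $\Gamma(v)$). Each non-root node $v$ carries an index $i_v\in\{1,\dots,d\}$ and each liana $l$ carries an index $j_l\in\{1,\dots,d\}$; for a liana end $e$ belonging to liana $l$ write $j_e=j_l$. Set $\partial_{I_{\pi(v)}}=\prod_{w\in\pi(v)}\partial_{i_w}$ and $\partial_{J_{\Gamma(v)}}=\prod_{e\in\Gamma(v)}\partial_{j_e}$, where $\partial_i=\partial/\partial x_i$. The elementary differential of $\gamma$ is the linear differential operator acting on smooth $\phi:\mathbb{R}^d\to\mathbb{R}$ by $$F(\gamma)(\phi)=\sum_{(i_v)_{v\in V^0}}\ \sum_{(j_l)_{l \text{ liana}}}\Big(\prod_{v\in V^0}\partial_{I_{\pi(v)}}\partial_{J_{\Gamma(v)}} f_{i_v}\Big)\,\partial_{I_{\pi(r)}}\partial_{J_{\Gamma(r)}}\phi,$$ all indices ranging over $\{1,\dots,d\}$. *)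

From HB Require Import structures.
From mathcomp Require Import all_boot all_order all_algebra.
From mathcomp Require Import all_classical all_reals all_analysis.
Set Implicit Arguments. Unset Strict Implicit. Unset Printing Implicit Defensive.
Import Order.TTheory GRing.Theory Num.Theory.
Import numFieldNormedType.Exports.
Local Open Scope ring_scope.

Section Defs.
Variable R : realType.
Variable d : nat.

Definition pd (i : 'I_d) (g : 'rV[R]_d -> R) : 'rV[R]_d -> R :=
  fun x => derive g x (delta_mx 0 i).

Definition ipd (s : seq 'I_d) (g : 'rV[R]_d -> R) : 'rV[R]_d -> R :=
  foldr pd g s.

Definition smooth (g : 'rV[R]_d -> R) : Prop :=
  forall (s : seq 'I_d) (x : 'rV[R]_d), differentiable (ipd s g) x.
End Defs.

(* An exotic aromatic rooted forest: non-root nodes are 'I_nn, the root is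
   None (nodes = option 'I_nn); each non-root node w has the outgoing edge
   w -> succ w; there are nl lianas, liana l has the two ends (l,false),(l,true),
   end e being attached to node lend e. *)
Record eaforest := EAF {
  nn : nat;
  nl : nat;
  succ : 'I_nn -> option 'I_nn;
  lend : 'I_nl * bool -> option 'I_nn
}.

Section Elem.
Variable R : realType.
Variable d : nat.

(* the multiset of derivative indices I_{pi(v)} J_{Gamma(v)} at node v *)
Definition dseq (g : eaforest) (iv : {ffun 'I_(nn g) -> 'I_d})
    (jl : {ffun 'I_(nl g) -> 'I_d}) (v : option 'I_(nn g)) : seq 'I_d :=
  map iv (seq.filter (fun w => @succ g w == v) (enum 'I_(nn g)))
  ++ map (fun e : 'I_(nl g) * bool => jl e.1)
         (seq.filter (fun e => @lend g e == v) (enum {: 'I_(nl g) * bool})).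

Definition Fel (g : eaforest) (f : 'I_d -> 'rV[R]_d -> R)
    (phi : 'rV[R]_d -> R) : 'rV[R]_d -> R :=
  fun x =>
    \sum_(iv : {ffun 'I_(nn g) -> 'I_d})
    \sum_(jl : {ffun 'I_(nl g) -> 'I_d})
      ((\prod_(v : 'I_(nn g)) ipd (dseq iv jl (Some v)) (f (iv v)) x)
       * ipd (dseq iv jl None) phi x).
End Elem.

Definition rootpred (g : eaforest) := {w : 'I_(nn g) | @succ g w == None}.
Definition rootends (g : eaforest) :=
  {e : 'I_(nl g) * bool | @lend g e == None}.

(* the grafted forest gamma_{vp,ps}: nodes V1 u V2^0, i.e. non-root nodes
   'I_(nn g1 + nn g2) (lshift = V1^0, rshift = V2^0), root = root of g1;
   lianas of g1 then lianas of g2. *)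
Definition graft (g1 g2 : eaforest)
    (vp : {ffun rootpred g2 -> option 'I_(nn g1)})
    (ps : {ffun rootends g2 -> option 'I_(nn g1)}) : eaforest :=
  @EAF (nn g1 + nn g2) (nl g1 + nl g2)
    (fun k => match fintype.split k with
     | inl w => omap (lshift (nn g2)) (@succ g1 w)
     | inr w =>
         match (insub w : option (rootpred g2)) with
         | Some w' => omap (lshift (nn g2)) (vp w')
         | None => omap (@rshift (nn g1) (nn g2)) (@succ g2 w)
         end
     end)
    (fun e => match fintype.split e.1 with
     | inl l => omap (lshift (nn g2)) (@lend g1 (l, e.2))
     | inr l =>
         match (insub (l, e.2) : option (rootends g2)) with
         | Some e' => omap (lshift (nn g2)) (ps e')
         | None => omap (@rshift (nn g1) (nn g2)) (@lend g2 (l, e.2))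
         end
     end).

(* F(g2)(F(g1) phi) is a sum over the labellings of g2 of products of node
   factors, the root factor being the derivative, in the directions of the edges
   and liana ends at the root of g2, of F(g1) phi.  The latter is itself a sum
   of products of node factors of g1, so by the Leibniz rule each of these
   directions falls on exactly one node of g1 (possibly its root), and such a
   choice is exactly a pair (vp, ps).  Since partial derivatives of smooth
   functions commute (Schwarz), a node factor only depends on the multiset of
   its directions, which is that of the same node in the grafted forest. *)

From mathcomp Require Import all_boot all_order all_algebra.
From mathcomp Require Import all_classical all_reals all_analysis.
From mathcomp Require Import ring.
Set Implicit Arguments.
Unset Strict Implicit.
Unset Printing Implicit Defensive.

Import Order.TTheory GRing.Theory Num.Theory.
Import numFieldNormedType.Exports.
Local Open Scope classical_set_scope.
Local Open Scope ring_scope.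

Section Schwarz.
Variables (R : realType) (n : nat).
Local Notation V := 'rV[R]_n.
Implicit Types (g : V -> R) (p q u v w x : V).

Lemma is_derive_line g p w (s : R) :
  derivable g (p + s *: w) w ->
  is_derive s 1 (fun t : R => g (p + t *: w)) ('D_w g (p + s *: w)).
Proof.
have quotE : (fun h : R => h^-1 *: (((fun t : R => g (p + t *: w)) \o shift s) (h *: 1)
                                    - (fun t : R => g (p + t *: w)) s))
           = (fun h : R => h^-1 *: ((g \o shift (p + s *: w)) (h *: w) - g (p + s *: w))).
  apply/funext => h /=; congr (_ *: (g _ - _)).
  by rewrite /shift /= scalerDl [h *: 1]mulr1 addrCA addrA.
move=> dg; have -> : 'D_w g (p + s *: w) = 'D_1 (fun t : R => g (p + t *: w)) s.
  by rewrite /derive quotE.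
by apply: derivableP; rewrite /derivable quotE.
Qed.

Lemma MVT0 (h dh : R -> R) (t : R) : 0 < t ->
  (forall s : R, is_derive s (1 : R) h (dh s)) ->
  exists2 s, 0 < s < t & h t - h 0 = dh s * t.
Proof.
move=> t0 hd.
have cont : {within `[0, t], continuous h}.
  apply: continuous_subspaceT => s; apply: differentiable_continuous.
  by apply/derivable1_diffP; case: (hd s).
have [s + ->] := MVT t0 (fun s _ => hd s) cont.
by rewrite in_itv subr0; exists s.
Qed.

Lemma second_difference_MVT g u v x (t : R) :
  (forall y, differentiable g y) -> (forall y, differentiable ('D_u g) y) ->
  0 < t ->
  exists a b, [/\ 0 < a < t, 0 < b < t &
    g (x + t *: v + t *: u) - g (x + t *: u) - (g (x + t *: v) - g x)
    = 'D_v ('D_u g) (x + a *: u + b *: v) * (t * t)].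
Proof.
move=> dg dDu t0.
pose h (a : R) := g (x + t *: v + a *: u) - g (x + a *: u).
have hd (a : R) : is_derive a 1 h ('D_u g (x + t *: v + a *: u) - 'D_u g (x + a *: u)).
  by apply: is_deriveB; apply: is_derive_line; apply: diff_derivable.
have [a aI ha] := MVT0 t0 hd.
pose k (b : R) := 'D_u g (x + a *: u + b *: v).
have kd (b : R) : is_derive b 1 k ('D_v ('D_u g) (x + a *: u + b *: v)).
  by apply: is_derive_line; apply: diff_derivable.
have [b bI kb] := MVT0 t0 kd.
exists a, b; split => //.
move: ha; rewrite /h !scale0r !addr0 => ->.
by rewrite mulrA -kb /k scale0r addr0 (addrAC x (t *: v)).
Qed.

Lemma norm_sub_line x p q (a b t : R) : 0 < a < t -> 0 < b < t ->
  `|x - (x + a *: p + b *: q)| < t * (`|p| + `|q| + 1).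
Proof.
move=> /andP[a0 at_] /andP[b0 bt].
rewrite -addrA opprD addrA subrr add0r normrN.
apply: (le_lt_trans (ler_normD _ _)); rewrite !normrZ !gtr0_norm //.
apply: (@le_lt_trans _ _ (t * `|p| + t * `|q|)).
  by apply: lerD; apply: ler_wpM2r => //; apply: ltW.
by rewrite -mulrDr ltr_pM2l ?(lt_trans a0) // ltrDl.
Qed.

Lemma continuous_eq_at (A B : V -> R) x :
  {for x, continuous A} -> {for x, continuous B} ->
  (forall r, 0 < r -> exists p q, [/\ `|x - p| < r, `|x - q| < r & A p = B q]) ->
  A x = B x.
Proof.
move=> cA cB near_eq; apply/eqP/negPn/negP => neqAB.
set e := `|A x - B x| / 2.
have e0 : 0 < e by rewrite divr_gt0 // normr_gt0 subr_eq0.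
move: (cA) => /cvgr_dist_lt /(_ _ e0) /nbhs_normP [rA rA0 HA].
move: (cB) => /cvgr_dist_lt /(_ _ e0) /nbhs_normP [rB rB0 HB].
have [|p [q [xp xq Apq]]] := near_eq (Num.min rA rB); first by rewrite lt_min rA0.
move: xp xq; rewrite !lt_min => /andP[xpA _] /andP[_ xqB].
have : `|A x - B x| < e + e.
  rewrite (_ : A x - B x = (A x - A p) - (B x - B q)); last by rewrite Apq; ring.
  by apply: (le_lt_trans (ler_normB _ _)); apply: ltrD; [apply: HA | apply: HB].
by rewrite -splitr ltxx.
Qed.

Lemma derive_mixedC g u v x :
  (forall y, differentiable g y) ->
  (forall y, differentiable ('D_u g) y) -> (forall y, differentiable ('D_v g) y) ->
  {for x, continuous ('D_v ('D_u g))} -> {for x, continuous ('D_u ('D_v g))} ->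
  'D_v ('D_u g) x = 'D_u ('D_v g) x.
Proof.
move=> dg dDu dDv cA cB; apply: continuous_eq_at cA cB _ => r r0.
set M := `|u| + `|v| + 1.
have M0 : 0 < M by rewrite ltr_wpDl // addr_ge0.
have t0 : 0 < r / M by rewrite divr_gt0.
have tM : r / M * M = r by rewrite divfK // gt_eqF.
have [a [b [aI bI Eu]]] := second_difference_MVT v x dg dDu t0.
have [a' [b' [aI' bI' Ev]]] := second_difference_MVT u x dg dDv t0.
exists (x + a *: u + b *: v), (x + a' *: v + b' *: u); split.
- by rewrite -[X in _ < X]tM norm_sub_line.
- have tM' : r / M * (`|v| + `|u| + 1) = r by rewrite [`|v| + _]addrC.
  by rewrite -[X in _ < X]tM' norm_sub_line.
have tt0 : r / M * (r / M) != 0 by rewrite mulf_neq0 // gt_eqF.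
apply: (mulIf tt0); rewrite -Eu -Ev.
by rewrite [x + _ *: u + _]addrAC; ring.
Qed.

End Schwarz.

Section IteratedPartials.
Variables (R : realType) (d : nat).
Local Notation V := 'rV[R]_d.
Implicit Types (g : V -> R) (s t : seq 'I_d).

Lemma ipd_cat s t g : ipd (s ++ t) g = ipd s (ipd t g).
Proof. by rewrite /ipd foldr_cat. Qed.

Lemma ipd_cons i s g : ipd (i :: s) g = pd i (ipd s g).
Proof. by []. Qed.

Lemma smooth_ipd s g : smooth g -> smooth (ipd s g).
Proof. by move=> sg t y; rewrite -ipd_cat; apply: sg. Qed.

Lemma smooth_differentiable g y : smooth g -> differentiable g y.
Proof. by move=> sg; apply: (sg [::]). Qed.

Lemma pdC i j g : smooth g -> pd i (pd j g) = pd j (pd i g).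
Proof.
move=> sg; apply/funext => x; apply: derive_mixedC => [y|y|y||].
- exact: (sg [::]).
- exact: (sg [:: j]).
- exact: (sg [:: i]).
- by apply: differentiable_continuous; apply: (sg [:: i; j]).
- by apply: differentiable_continuous; apply: (sg [:: j; i]).
Qed.

Lemma perm_ipd s t g : smooth g -> perm_eq s t -> ipd s g = ipd t g.
Proof.
move=> sg; elim: s t => [|i s IH] t; first by move=> /perm_size/esym/size0nil ->.
move=> pst; have it : i \in t by rewrite -(perm_mem pst) mem_head.
move: pst; case/splitPr: it => a b pst.
have -> : ipd (a ++ i :: b) g = ipd (i :: a ++ b) g.
  elim: a {pst} => [|j a IHa] //.
  by rewrite cat_cons !ipd_cons IHa ipd_cons pdC //; apply: smooth_ipd.
rewrite !ipd_cons (IH (a ++ b)) // -(perm_cons i) (perm_trans pst) //.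
by rewrite -[i :: b]cat1s perm_catCA.
Qed.

Section BigOps.
Variables (T : Type) (r : seq T) (F : T -> V -> R).

Lemma differentiable_big_sum y : (forall a, differentiable (F a) y) ->
  differentiable (fun z => \sum_(a <- r) F a z) y.
Proof.
move=> dF; rewrite -fct_sumE.
elim/big_ind: _ => [|G H|a _];
  [exact: differentiable_cst | exact: differentiableD | exact: dF].
Qed.

Lemma differentiable_big_prod y : (forall a, differentiable (F a) y) ->
  differentiable (fun z => \prod_(a <- r) F a z) y.
Proof.
move=> dF; rewrite -fct_prodE.
elim/big_ind: _ => [|G H|a _];
  [exact: differentiable_cst | exact: differentiableM | exact: dF].
Qed.

Lemma pd_big_sum i y : (forall a, differentiable (F a) y) ->
  pd i (fun z => \sum_(a <- r) F a z) y = \sum_(a <- r) pd i (F a) y.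
Proof.
move=> dF; rewrite -fct_sumE; apply: derive_val.
elim/big_ind2: _ => [|G dG H dH|a _]; first exact: is_derive_cst.
- by move=> ? ?; apply: is_deriveD.
- by apply: derivableP; apply: diff_derivable.
Qed.

End BigOps.

Lemma pd_big_prod (K : eqType) (r : seq K) (h : K -> V -> R) i y :
  uniq r -> (forall k, differentiable (h k) y) ->
  pd i (fun z => \prod_(k <- r) h k z) y =
  \sum_(k0 <- r) \prod_(k <- r) (if k == k0 then pd i (h k) y else h k y).
Proof.
move=> + dh; elim: r => [_|a r IH /andP[ar ur]].
  by rewrite big_nil -fct_prodE big_nil; apply: derive_cst.
have -> : (fun z => \prod_(k <- a :: r) h k z) = h a * (fun z => \prod_(k <- r) h k z).
  by apply/funext => z; rewrite big_cons.
rewrite /pd deriveM; last 2 first.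
- exact: diff_derivable.
- by apply: diff_derivable; apply: differentiable_big_prod.
have neq_a k : k \in r -> (k == a) = false.
  by move=> kr; apply/eqP => ka; rewrite -ka kr in ar.
rewrite -/(pd i _ y) (IH ur) big_cons big_cons eqxx addrC; congr (_ + _).
  rewrite [RHS]mulrC big_seq [in RHS]big_seq; congr (_ * _).
  by apply: eq_bigr => k /neq_a ->.
rewrite -[h a y *: _]/(h a y * _) big_distrr /= !big_seq.
by apply: eq_bigr => k0 /neq_a; rewrite big_cons eq_sym => ->.
Qed.

Lemma ipd_big_sum (T : Type) (r : seq T) (F : T -> V -> R) s :
  (forall a, smooth (F a)) ->
  ipd s (fun z => \sum_(a <- r) F a z) = fun z => \sum_(a <- r) ipd s (F a) z.
Proof.
move=> sF; elim: s => [|i s IH] //; apply/funext => y.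
rewrite ipd_cons IH pd_big_sum // => a.
by apply: smooth_differentiable; apply: smooth_ipd.
Qed.

Lemma smooth_big_sum (T : Type) (r : seq T) (F : T -> V -> R) :
  (forall a, smooth (F a)) -> smooth (fun z => \sum_(a <- r) F a z).
Proof.
move=> sF s y; rewrite ipd_big_sum //.
by apply: differentiable_big_sum => a; apply: sF.
Qed.

End IteratedPartials.

Section BigOption.
Variables (M : Type) (idx : M) (op : Monoid.law idx).

Lemma big_option (T : finType) (F : option T -> M) :
  \big[op/idx]_(k : option T) F k = op (F None) (\big[op/idx]_(v : T) F (Some v)).
Proof.
by rewrite ![index_enum _]unlock [@Finite.enum in LHS]unlock /= big_cons big_map.
Qed.

Lemma big_option_split_ord m n (F : option 'I_(m + n) -> M) :
  \big[op/idx]_(k : option 'I_(m + n)) F k =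
  op (\big[op/idx]_(k : option 'I_m) F (omap (lshift n) k))
     (\big[op/idx]_(v : 'I_n) F (Some (rshift m v))).
Proof. by rewrite !big_option big_split_ord Monoid.mulmA. Qed.

End BigOption.

Section FinFunSums.
Variable M : nmodType.

Definition fcons n (K : finType) (k0 : K) (c : {ffun 'I_n -> K}) : {ffun 'I_n.+1 -> K} :=
  [ffun i => if unlift ord0 i is Some j then c j else k0].

Lemma fcons0 n (K : finType) (k0 : K) (c : {ffun 'I_n -> K}) : fcons k0 c ord0 = k0.
Proof. by rewrite ffunE unlift_none. Qed.

Lemma fcons_lift n (K : finType) (k0 : K) (c : {ffun 'I_n -> K}) (j : 'I_n) :
  fcons k0 c (lift ord0 j) = c j.
Proof. by rewrite ffunE liftK. Qed.

Lemma sum_ffunS n (K : finType) (G : {ffun 'I_n.+1 -> K} -> M) :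
  \sum_(c : {ffun 'I_n.+1 -> K}) G c =
  \sum_(k0 : K) \sum_(c : {ffun 'I_n -> K}) G (fcons k0 c).
Proof.
rewrite pair_bigA (reindex (fun p : K * {ffun 'I_n -> K} => fcons p.1 p.2)) //.
exists (fun c : {ffun 'I_n.+1 -> K} => (c ord0, [ffun j : 'I_n => c (lift ord0 j)])).
  by move=> [k0 c] _; rewrite fcons0; congr pair; apply/ffunP => j; rewrite ffunE fcons_lift.
move=> c _; apply/ffunP => i; rewrite ffunE.
by case: unliftP => [j ->|->]; rewrite ?ffunE.
Qed.

Lemma sum_ffun_comp (E E' K : finType) (h : E -> E') (h' : E' -> E) :
    cancel h h' -> cancel h' h -> forall G : {ffun E -> K} -> M,
  \sum_(c : {ffun E -> K}) G c = \sum_(c : {ffun E' -> K}) G [ffun e => c (h e)].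
Proof.
move=> hK h'K G; rewrite (reindex (fun c : {ffun E' -> K} => [ffun e => c (h e)])) //.
exists (fun c : {ffun E -> K} => [ffun e' => c (h' e')]) => c _;
  by apply/ffunP => e; rewrite !ffunE ?h'K ?hK.
Qed.

Definition fglue (A B K : finType) (a : {ffun A -> K}) (b : {ffun B -> K}) :
  {ffun A + B -> K} := [ffun z => match z with inl x => a x | inr y => b y end].

Lemma fglue_inl (A B K : finType) (a : {ffun A -> K}) (b : {ffun B -> K}) (x : A) :
  fglue a b (inl x) = a x.
Proof. by rewrite ffunE. Qed.

Lemma fglue_inr (A B K : finType) (a : {ffun A -> K}) (b : {ffun B -> K}) (y : B) :
  fglue a b (inr y) = b y.
Proof. by rewrite ffunE. Qed.

Lemma sum_ffun_sumType (A B K : finType) (G : {ffun A + B -> K} -> M) :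
  \sum_(c : {ffun A + B -> K}) G c =
  \sum_(a : {ffun A -> K}) \sum_(b : {ffun B -> K}) G (fglue a b).
Proof.
rewrite pair_bigA (reindex (fun p : {ffun A -> K} * {ffun B -> K} => fglue p.1 p.2)) //.
exists (fun c : {ffun A + B -> K} => ([ffun x => c (inl x)], [ffun y => c (inr y)])).
  by move=> [a b] _; congr pair; apply/ffunP => z; rewrite !ffunE.
by move=> c _; apply/ffunP => -[x|y]; rewrite !ffunE.
Qed.

Definition fjoin m n (K : finType) (a : {ffun 'I_m -> K}) (b : {ffun 'I_n -> K}) :
  {ffun 'I_(m + n) -> K} := [ffun i => fglue a b (fintype.split i)].

Lemma fjoin_lshift m n (K : finType) (a : {ffun 'I_m -> K}) (b : {ffun 'I_n -> K}) (i : 'I_m) :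
  fjoin a b (lshift n i) = a i.
Proof. by rewrite !ffunE (unsplitK (inl i)). Qed.

Lemma fjoin_rshift m n (K : finType) (a : {ffun 'I_m -> K}) (b : {ffun 'I_n -> K}) (i : 'I_n) :
  fjoin a b (rshift m i) = b i.
Proof. by rewrite !ffunE (unsplitK (inr i)). Qed.

Lemma sum_ffun_split_ord m n (K : finType) (G : {ffun 'I_(m + n) -> K} -> M) :
  \sum_(c : {ffun 'I_(m + n) -> K}) G c =
  \sum_(a : {ffun 'I_m -> K}) \sum_(b : {ffun 'I_n -> K}) G (fjoin a b).
Proof. by rewrite (sum_ffun_comp (@splitK m n) (@unsplitK m n)) sum_ffun_sumType. Qed.

Lemma sum_reorder (I1 I2 J1 J2 P Q : finType) (F : I1 -> I2 -> J1 -> J2 -> P -> Q -> M) :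
  \sum_(i2 : I2) \sum_(j2 : J2) \sum_(i1 : I1) \sum_(j1 : J1) \sum_(p : P) \sum_(q : Q)
     F i1 i2 j1 j2 p q =
  \sum_(p : P) \sum_(q : Q) \sum_(i1 : I1) \sum_(i2 : I2) \sum_(j1 : J1) \sum_(j2 : J2)
     F i1 i2 j1 j2 p q.
Proof.
rewrite !pair_big /=.
pose h (t : P * Q * I1 * I2 * J1 * J2) :=
  let: (p, q, i1, i2, j1, j2) := t in (i2, j2, i1, j1, p, q).
rewrite (reindex h) /=; last first.
  exists (fun t : I2 * J2 * I1 * J1 * P * Q =>
            let: (i2, j2, i1, j1, p, q) := t in (p, q, i1, i2, j1, j2)).
    by case=> [[[[[]]]]].
  by case=> [[[[[]]]]].
by apply: eq_bigr => -[[[[[]]]]].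
Qed.

End FinFunSums.

Section Leibniz.
Variables (R : realType) (d : nat).
Local Notation V := 'rV[R]_d.

Lemma ipd_big_prod_ord n (K : finType) (H : K -> V -> R) (lab : 'I_n -> 'I_d) :
  (forall k, smooth (H k)) ->
  ipd (map lab (enum 'I_n)) (fun y => \prod_k H k y) =
  fun y => \sum_(c : {ffun 'I_n -> K})
             \prod_k ipd (map lab [seq i <- enum 'I_n | c i == k]) (H k) y.
Proof.
move=> sH; have dH s k y : differentiable (ipd s (H k)) y.
  by apply: smooth_differentiable; apply: smooth_ipd.
elim: n lab => [|n IH] lab.
  by apply/funext => y; rewrite enum_ord0 /= sumr_const card_ffun card_ord expn0.
rewrite enum_ordSl map_cons ipd_cons -map_comp IH; apply/funext => y.
rewrite pd_big_sum; last by move=> c; apply: differentiable_big_prod.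
rewrite sum_ffunS exchange_big; apply: eq_bigr => c _.
rewrite pd_big_prod ?index_enum_uniq //; apply: eq_bigr => k0 _; apply: eq_bigr => k _.
rewrite /= fcons0 filter_map.
have -> : seq.filter (preim (lift ord0) (fun i => fcons k0 c i == k)) (enum 'I_n) =
          [seq j <- enum 'I_n | c j == k].
  by apply: eq_filter => j; rewrite /= fcons_lift.
by rewrite eq_sym; case: eqP => _; rewrite /= -map_comp.
Qed.

Lemma smooth_big_prod (K : finType) (H : K -> V -> R) :
  (forall k, smooth (H k)) -> smooth (fun y => \prod_k H k y).
Proof.
move=> sH s y; have := ipd_big_prod_ord (tnth (in_tuple s)) sH.
rewrite map_tnth_enum => ->; apply: differentiable_big_sum => c.
apply: differentiable_big_prod => k.
by apply: smooth_differentiable; apply: smooth_ipd.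
Qed.

Lemma perm_enum_val (E : finType) :
  perm_eq (map (@enum_val _ (pred_of_argType E)) (enum 'I_#|E|)) (enum E).
Proof.
apply: uniq_perm; first by rewrite map_inj_uniq ?enum_uniq //; apply: enum_val_inj.
  exact: enum_uniq.
move=> e; rewrite mem_enum; apply/mapP; exists (enum_rank e).
  by rewrite mem_enum.
by rewrite enum_rankK.
Qed.

(* Leibniz rule: [c] sends each derivative to the factor it falls on. *)
Lemma ipd_big_prod (E K : finType) (H : K -> V -> R) (lab : E -> 'I_d) :
  (forall k, smooth (H k)) ->
  ipd (map lab (enum E)) (fun y => \prod_k H k y) =
  fun y => \sum_(c : {ffun E -> K})
             \prod_k ipd (map lab [seq e <- enum E | c e == k]) (H k) y.
Proof.
move=> sH.
have pe : perm_eq (map lab (enum E)) (map (lab \o enum_val) (enum 'I_#|E|)).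
  by rewrite map_comp perm_map // perm_sym perm_enum_val.
rewrite (perm_ipd (smooth_big_prod sH) pe) ipd_big_prod_ord //; apply/funext => y.
rewrite (sum_ffun_comp (@enum_valK E) (@enum_rankK E)).
apply: eq_bigr => c _; apply: eq_bigr => k _; congr (_ y).
apply: perm_ipd => //; rewrite map_comp; apply: perm_map.
rewrite (@eq_filter _ _ (preim enum_val (fun e => c e == k))) => [|i]; last first.
  by rewrite /= ffunE.
by rewrite -filter_map; apply: perm_filter; apply: perm_enum_val.
Qed.

End Leibniz.

Section BigSums.
Variable M : nmodType.

Lemma big_split_ord_pair m n (B : finType) (Q : pred ('I_(m + n) * B))
    (F : 'I_(m + n) * B -> M) :
  \sum_(e | Q e) F e =
  \sum_(e : 'I_m * B | Q (lshift n e.1, e.2)) F (lshift n e.1, e.2) +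
  \sum_(e : 'I_n * B | Q (rshift m e.1, e.2)) F (rshift m e.1, e.2).
Proof.
rewrite (eq_bigl (fun e => true && Q (e.1, e.2))) => [|[]//].
rewrite (eq_bigr (fun e => F (e.1, e.2))) => [|[]//].
by rewrite -(pair_big_dep xpredT (fun a b => Q (a, b)) (fun a b => F (a, b))) big_split_ord
  !pair_big_dep.
Qed.

Lemma sum_sig (T : finType) (Q : pred T) (Rp : pred {x | Q x}) (F : T -> M) :
  \sum_(s : {x | Q x} | Rp s) F (val s) =
  \sum_(x | if (insub x : option {x | Q x}) is Some s then Rp s else false) F x.
Proof.
rewrite [RHS](reindex_omap (val : {x | Q x} -> T) insub) => [|x].
  by apply: eq_bigl => s; rewrite valK eqxx andbT.
by case: insubP => // s _ <-.
Qed.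

Lemma eq_omap_lshift m n (x y : option 'I_m) :
  (omap (lshift n) x == omap (lshift n) y) = (x == y).
Proof. by case: x; case: y => //= a b; rewrite eq_lshift. Qed.

Lemma sum_omap_lshift m n (T : finType) (tgt : T -> option 'I_m) (F : T -> M) k :
  \sum_(x | omap (lshift n) (tgt x) == omap (lshift n) k) F x = \sum_(x | tgt x == k) F x.
Proof. by apply: eq_bigl => x; rewrite eq_omap_lshift. Qed.

Lemma sum_omap_lshift_rshift m n (T : finType) (tgt : T -> option 'I_m) (F : T -> M) v :
  \sum_(x | omap (lshift n) (tgt x) == Some (rshift m v)) F x = 0.
Proof.
by apply: big_pred0 => x; case: (tgt x) => //= j; rewrite (inj_eq (@Some_inj _)) eq_lrshift.
Qed.

End BigSums.

Section InDegrees.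

Lemma count_map_filter (T : finType) (A : Type) (Q : pred T) (h : T -> A) (P : pred A) :
  count P (map h [seq t <- enum T | Q t]) = \sum_(t | Q t) (P (h t) : nat).
Proof.
rewrite count_map count_filter -sum1_count big_enum_cond big_mkcond [RHS]big_mkcond.
by apply: eq_bigr => t _ /=; case: (Q t); case: (P (h t)).
Qed.

Lemma count_dseq d (g : eaforest) (iv : {ffun 'I_(nn g) -> 'I_d})
    (jl : {ffun 'I_(nl g) -> 'I_d}) v (P : pred 'I_d) :
  count P (dseq iv jl v) =
  \sum_(w | succ w == v) (P (iv w) : nat) + \sum_(e | lend e == v) (P (jl e.1) : nat).
Proof. by rewrite /dseq count_cat !count_map_filter. Qed.

Definition root_label d (g : eaforest) (iv : {ffun 'I_(nn g) -> 'I_d})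
    (jl : {ffun 'I_(nl g) -> 'I_d}) (e : rootpred g + rootends g) : 'I_d :=
  match e with inl w => iv (val w) | inr e => jl (val e).1 end.

Lemma perm_dseq_root d (g : eaforest) (iv : {ffun 'I_(nn g) -> 'I_d})
    (jl : {ffun 'I_(nl g) -> 'I_d}) :
  perm_eq (dseq iv jl None) (map (root_label iv jl) (enum {: rootpred g + rootends g})).
Proof.
apply/permP => P; rewrite count_dseq -(filter_predT (enum _)) count_map_filter big_sumType.
congr (_ + _); [rewrite [RHS](sum_sig xpredT (fun w => P (iv w) : nat)) |
                rewrite [RHS](sum_sig xpredT (fun e => P (jl e.1) : nat))];
  by apply: eq_bigl => x; case: insubP => [? ->|/negbTE ->].
Qed.

End InDegrees.

Section GraftTarget.
Variable M : nmodType.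
Variables (n1 n2 : nat) (T : finType) (tgt : T -> option 'I_n2).
Variable c : {x : T | tgt x == None} -> option 'I_n1.

(* An arrow (edge or liana end) of the second forest with target [tgt x] ([None]
   for the root) is redirected by [c] into the first forest if it points at the
   root, and shifted past the first forest's nodes otherwise. *)
Definition graft_target (x : T) : option 'I_(n1 + n2) :=
  match (insub x : option {x : T | tgt x == None}) with
  | Some s => omap (lshift n2) (c s)
  | None => omap (@rshift n1 n2) (tgt x)
  end.

Lemma sum_graft_target_lshift (F : T -> M) k :
  \sum_(x | graft_target x == omap (lshift n2) k) F x =
  \sum_(s : {x | tgt x == None} | c s == k) F (val s).
Proof.
rewrite sum_sig; apply: eq_bigl => x; rewrite /graft_target.
case: insubP => [s _ _|]; first by rewrite eq_omap_lshift.
by case: (tgt x) => //= j _; case: k => //= k; rewrite (inj_eq (@Some_inj _)) eq_rlshift.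
Qed.

Lemma sum_graft_target_rshift (F : T -> M) v :
  \sum_(x | graft_target x == Some (rshift n1 v)) F x = \sum_(x | tgt x == Some v) F x.
Proof.
apply: eq_bigl => x; rewrite /graft_target.
case: insubP => [s /eqP-> _|_].
  by case: (c s) => //= j; rewrite (inj_eq (@Some_inj _)) eq_lrshift.
by case: (tgt x) => //= j; rewrite (inj_eq (@Some_inj _)) eq_rshift.
Qed.

End GraftTarget.

Section GraftInDegrees.
Variables (g1 g2 : eaforest).
Variables (vp : {ffun rootpred g2 -> option 'I_(nn g1)})
          (ps : {ffun rootends g2 -> option 'I_(nn g1)}).
Local Notation gr := (graft vp ps).

Lemma succ_graft_lshift (w : 'I_(nn g1)) :
  @succ gr (lshift (nn g2) w) = omap (lshift (nn g2)) (succ w).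
Proof. by rewrite /= (unsplitK (inl w)). Qed.

Lemma succ_graft_rshift (w : 'I_(nn g2)) :
  @succ gr (rshift (nn g1) w) = graft_target (fun s => vp s) w.
Proof. by rewrite /= (unsplitK (inr w)). Qed.

Lemma lend_graft_lshift (l : 'I_(nl g1)) b :
  @lend gr (lshift (nl g2) l, b) = omap (lshift (nn g2)) (lend (l, b)).
Proof. by rewrite /= (unsplitK (inl l)). Qed.

Lemma lend_graft_rshift (l : 'I_(nl g2)) b :
  @lend gr (rshift (nl g1) l, b) = graft_target (fun s => ps s) (l, b).
Proof. by rewrite /= (unsplitK (inr l)). Qed.

Variable d : nat.
Variables (iv1 : {ffun 'I_(nn g1) -> 'I_d}) (iv2 : {ffun 'I_(nn g2) -> 'I_d})
          (jl1 : {ffun 'I_(nl g1) -> 'I_d}) (jl2 : {ffun 'I_(nl g2) -> 'I_d}).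

Lemma count_dseq_graft v (P : pred 'I_d) :
  count P (dseq (g := gr) (fjoin iv1 iv2) (fjoin jl1 jl2) v) =
  (\sum_(w | omap (lshift (nn g2)) (succ w) == v) (P (iv1 w) : nat) +
   \sum_(w | graft_target (fun s => vp s) w == v) (P (iv2 w) : nat)) +
  (\sum_(e | omap (lshift (nn g2)) (lend e) == v) (P (jl1 e.1) : nat) +
   \sum_(e | graft_target (fun s => ps s) e == v) (P (jl2 e.1) : nat)).
Proof.
rewrite count_dseq big_split_ord big_split_ord_pair.
congr (_ + _ + (_ + _)); apply: eq_big => [x|x _];
  rewrite ?succ_graft_lshift ?succ_graft_rshift ?lend_graft_lshift ?lend_graft_rshift;
  by rewrite /= -?surjective_pairing ?fjoin_lshift ?fjoin_rshift.
Qed.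

(* The derivative indices at the root of [g2] that the graft moves to node [k] of [g1]. *)
Definition grafted_dseq (k : option 'I_(nn g1)) : seq 'I_d :=
  map (root_label iv2 jl2) [seq e <- enum {: rootpred g2 + rootends g2} | fglue vp ps e == k].

Lemma perm_dseq_graft_lshift k :
  perm_eq (dseq (g := gr) (fjoin iv1 iv2) (fjoin jl1 jl2) (omap (lshift (nn g2)) k))
          (grafted_dseq k ++ dseq iv1 jl1 k).
Proof.
apply/permP => P; rewrite count_dseq_graft count_cat !count_dseq count_map_filter big_sumType.
rewrite !sum_omap_lshift !sum_graft_target_lshift addrACA addrC.
by congr (_ + _ + _); apply: eq_bigl => s; rewrite ?fglue_inl ?fglue_inr.
Qed.

Lemma perm_dseq_graft_rshift v :
  perm_eq (dseq (g := gr) (fjoin iv1 iv2) (fjoin jl1 jl2) (Some (rshift (nn g1) v)))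
          (dseq iv2 jl2 (Some v)).
Proof.
apply/permP => P; rewrite count_dseq_graft count_dseq.
by rewrite !sum_omap_lshift_rshift !sum_graft_target_rshift !add0r.
Qed.

End GraftInDegrees.

Section ElementaryDifferentials.
Variables (R : realType) (d : nat).
Local Notation V := 'rV[R]_d.
Variables (f : 'I_d -> V -> R) (phi : V -> R).
Hypotheses (hf : forall i, smooth (f i)) (hphi : smooth phi).

Definition node_factor (g : eaforest) (iv : {ffun 'I_(nn g) -> 'I_d})
    (jl : {ffun 'I_(nl g) -> 'I_d}) (k : option 'I_(nn g)) : V -> R :=
  ipd (dseq iv jl k) (if k is Some v then f (iv v) else phi).

Lemma smooth_node_factor g iv jl k : smooth (@node_factor g iv jl k).
Proof. by case: k => [v|]; apply: smooth_ipd. Qed.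

Lemma Fel_node_factors g :
  Fel g f phi = fun y => \sum_iv \sum_jl \prod_(k : option 'I_(nn g)) node_factor iv jl k y.
Proof.
apply/funext => y; apply: eq_bigr => iv _; apply: eq_bigr => jl _.
by rewrite big_option; apply: mulrC.
Qed.

Lemma smooth_Fel g : smooth (Fel g f phi).
Proof.
rewrite Fel_node_factors; do 2![apply: smooth_big_sum => ?].
by apply: smooth_big_prod => k; apply: smooth_node_factor.
Qed.

Lemma ipd_Fel g (E : finType) (lab : E -> 'I_d) :
  ipd (map lab (enum E)) (Fel g f phi) =
  fun y => \sum_iv \sum_jl \sum_(c : {ffun E -> option 'I_(nn g)})
    \prod_k ipd (map lab [seq e <- enum E | c e == k]) (node_factor iv jl k) y.
Proof.
have sprod iv jl : smooth (fun y => \prod_k @node_factor g iv jl k y).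
  by apply: smooth_big_prod => k; apply: smooth_node_factor.
rewrite Fel_node_factors ipd_big_sum => [|iv]; last by apply: smooth_big_sum.
apply/funext => y; apply: eq_bigr => iv _; rewrite ipd_big_sum //.
apply: eq_bigr => jl _; rewrite ipd_big_prod // => k.
exact: smooth_node_factor.
Qed.

Section GraftFactors.
Variables (g1 g2 : eaforest).
Variables (vp : {ffun rootpred g2 -> option 'I_(nn g1)})
          (ps : {ffun rootends g2 -> option 'I_(nn g1)}).
Local Notation gr := (graft vp ps).
Variables (iv1 : {ffun 'I_(nn g1) -> 'I_d}) (iv2 : {ffun 'I_(nn g2) -> 'I_d})
          (jl1 : {ffun 'I_(nl g1) -> 'I_d}) (jl2 : {ffun 'I_(nl g2) -> 'I_d}).

Lemma node_factor_graft_lshift k :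
  node_factor (g := gr) (fjoin iv1 iv2) (fjoin jl1 jl2) (omap (lshift (nn g2)) k) =
  ipd (grafted_dseq vp ps iv2 jl2 k) (node_factor iv1 jl1 k).
Proof.
rewrite /node_factor -ipd_cat.
have -> : (if omap (lshift (nn g2)) k is Some v then f (fjoin iv1 iv2 v) else phi) =
          (if k is Some v then f (iv1 v) else phi).
  by case: k => //= v; rewrite fjoin_lshift.
apply: perm_ipd; first by case: k.
exact: perm_dseq_graft_lshift.
Qed.

Lemma node_factor_graft_rshift v :
  node_factor (g := gr) (fjoin iv1 iv2) (fjoin jl1 jl2) (Some (rshift (nn g1) v)) =
  ipd (dseq iv2 jl2 (Some v)) (f (iv2 v)).
Proof.
rewrite /node_factor fjoin_rshift; apply: perm_ipd => //.
exact: perm_dseq_graft_rshift.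
Qed.

Definition graft_term (y : V) : R :=
  (\prod_(v : 'I_(nn g2)) ipd (dseq iv2 jl2 (Some v)) (f (iv2 v)) y) *
  \prod_(k : option 'I_(nn g1)) ipd (grafted_dseq vp ps iv2 jl2 k) (node_factor iv1 jl1 k) y.

End GraftFactors.

Lemma Fel_graft g1 g2 vp ps x :
  Fel (@graft g1 g2 vp ps) f phi x =
  \sum_iv1 \sum_iv2 \sum_jl1 \sum_jl2 graft_term vp ps iv1 iv2 jl1 jl2 x.
Proof.
rewrite Fel_node_factors /= sum_ffun_split_ord; apply: eq_bigr => iv1 _.
apply: eq_bigr => iv2 _; rewrite sum_ffun_split_ord; apply: eq_bigr => jl1 _.
apply: eq_bigr => jl2 _; rewrite big_option_split_ord [RHS]mulrC.
congr (_ * _); apply: eq_bigr => *.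
- by rewrite node_factor_graft_lshift.
- by rewrite node_factor_graft_rshift.
Qed.

Lemma Fel_Fel g1 g2 x :
  Fel g2 f (Fel g1 f phi) x =
  \sum_iv2 \sum_jl2 \sum_iv1 \sum_jl1 \sum_vp \sum_ps
    @graft_term g1 g2 vp ps iv1 iv2 jl1 jl2 x.
Proof.
apply: eq_bigr => iv2 _; apply: eq_bigr => jl2 _.
rewrite (perm_ipd (smooth_Fel g1) (perm_dseq_root iv2 jl2)) ipd_Fel big_distrr.
apply: eq_bigr => iv1 _; rewrite big_distrr; apply: eq_bigr => jl1 _.
rewrite sum_ffun_sumType big_distrr; apply: eq_bigr => vp _.
by rewrite big_distrr.
Qed.

End ElementaryDifferentials.

Theorem mainTheorem1 (R : realType) (d : nat) (hd : (0 < d)%N)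
    (f : 'I_d -> 'rV[R]_d -> R) (phi : 'rV[R]_d -> R)
    (hf : forall i : 'I_d, smooth (f i)) (hphi : smooth phi)
    (g1 g2 : eaforest) (x : 'rV[R]_d) :
  Fel g2 f (Fel g1 f phi) x =
  \sum_(vp : {ffun rootpred g2 -> option 'I_(nn g1)})
  \sum_(ps : {ffun rootends g2 -> option 'I_(nn g1)})
     Fel (graft vp ps) f phi x.
Proof.
rewrite Fel_Fel // sum_reorder.
by apply: eq_bigr => vp _; apply: eq_bigr => ps _; rewrite Fel_graft.
Qed.
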